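(* Let $\tilde\beta\in(0,1)$. Consider the conditions (C2.1): there exist symmetric positive definite $Q^{(k)}\in\mathbb{R}^{\tilde n\times\tilde n}$, $k\in\{1,\dots,N\}$, $H\in\mathbb{R}^{n\times n}$ and $L\in\mathbb{R}^{m\times n}$ such that $S^{(k)}_{\rm qmi}(Q^{(k)},H,L,\tilde\beta)\succeq0$ for all $k$; (C2.2): there exist symmetric positive definite $Q^{(k)}$, $H$, $L$ such that $S^{(k)}_{\rm qmi}(Q^{(k)},H,L,1)\succ0$ for all $k$; and the conditions (C1.1): there exist symmetric positive definite $P^{(k)}\in\mathbb{R}^{\tilde n\times\tilde n}$, $G\in\mathbb{R}^{\tilde n\times\tilde n}$, $K\in\mathbb{R}^{m\times n}$ with $\begin{bmatrix}\tilde\beta^2P^{(k)} & \mathcal{C}(F^{(k)}(K))^\top G\\ G^\top\mathcal{C}(F^{(k)}(K)) & G^\top+G-P^{(k)}\end{bmatrix}\succeq0$ for all $k$; (C1.2): the same with $\tilde\beta$ replaced by $1$ and $\succeq$ replaced by $\succ$. Then (C2.1) implies (C1.1), and (C2.2) implies (C1.2), with the choices $$P^{(k)}=G^\top Q^{(k)}G,\qquad G=\mathcal{C}(H\otimes H)^{-1},\qquad K=LH^{-1}$$ (where these inverses exist). Furthermore, if the $Q^{(k)}$ are identical for all $k$, then the $P^{(k)}$ so defined are identical.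
   Context: Let $n,m,N$ be positive integers, $\tilde n=n(n+1)/2$. $\mathrm{vec}$ stacks columns; $\mathrm{vech}(X)$ stacks columnwise the entries on and below the diagonal. $E_e\in\mathbb{R}^{\tilde n\times n^2}$ satisfies $E_e\mathrm{vec}(X)=\mathrm{vech}(X)$ for all $X\in\mathbb{R}^{n\times n}$, $D\in\mathbb{R}^{n^2\times\tilde n}$ satisfies $D\mathrm{vech}(Y)=\mathrm{vec}(Y)$ for all symmetric $Y$, $\mathcal{C}(Y):=E_eYD$ for $Y\in\mathbb{R}^{n^2\times n^2}$. Let $M^{(1)},\dots,M^{(N)}\in\mathbb{R}^{n(n+m)\times n(n+m)}$ be symmetric (second-moment vertices of an SMP system), with blocks $M^{(k)}_{i,j}\in\mathbb{R}^{n\times n}$, $i,j\le n+m$. Column $n(j-1)+i$ of $F^{(k)}_{aa}\in\mathbb{R}^{n^2\times n^2}$ is $\mathrm{vec}(M^{(k)}_{i,j})$; column $m(j-1)+i'$ of $F^{(k)}_{ab}\in\mathbb{R}^{n^2\times nm}$ is $\mathrm{vec}(M^{(k)}_{n+i',j})$; column $n(j'-1)+i$ of $F^{(k)}_{ba}\in\mathbb{R}^{n^2\times nm}$ is $\mathrm{vec}(M^{(k)}_{i,n+j'})$; column $m(j'-1)+i'$ of $F^{(k)}_{bb}\in\mathbb{R}^{n^2\times m^2}$ is $\mathrm{vec}(M^{(k)}_{n+i',n+j'})$ ($i,j\le n$, $i',j'\le m$). $F^{(k)}(K):=F^{(k)}_{aa}-F^{(k)}_{ab}(I_n\otimes K)-F^{(k)}_{ba}(K\otimes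 I_n)+F^{(k)}_{bb}(K\otimes K)$. Define $F^{(k)}_{\rm qmi}(L,H):=\mathcal{C}\big(F^{(k)}_{aa}(H\otimes H)-F^{(k)}_{ab}(H\otimes L)-F^{(k)}_{ba}(L\otimes H)+F^{(k)}_{bb}(L\otimes L)\big)$ and $S^{(k)}_{\rm qmi}(Q,H,L,\tilde\beta):=\begin{bmatrix}\tilde\beta^2Q & F^{(k)}_{\rm qmi}(L,H)^\top\\ F^{(k)}_{\rm qmi}(L,H) & \mathcal{C}(H\otimes H)+\mathcal{C}(H\otimes H)^\top-Q\end{bmatrix}$ for symmetric $Q\in\mathbb{R}^{\tilde n\times\tilde n}$. *)

From HB Require Import structures.
From mathcomp Require Import all_boot all_order all_algebra.
From mathcomp Require Export mxtens.
Set Implicit Arguments. Unset Strict Implicit. Unset Printing Implicit Defensive.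
Import Order.TTheory GRing.Theory Num.Theory.
Local Open Scope ring_scope.

Section Defs.
Variable R : realFieldType.

Definition tn (n : nat) : nat := (n * n.+1) %/ 2.

(* Kronecker product A (x) B, with (i1,i2) |-> i1 * p + i2 (standard). *)
Definition kron {m1 n1 m2 n2} (A : 'M[R]_(m1, n1)) (B : 'M[R]_(m2, n2))
  : 'M[R]_(m1 * m2, n1 * n2) := tensmx A B.

(* vec: column stacking; entry (i,j) goes to (0-based) position j*n + i. *)
Definition vec {n} (X : 'M[R]_n) : 'cV[R]_(n * n) :=
  \col_k X (mxtens_unindex k).2 (mxtens_unindex k).1.

Definition vech {n} (X : 'M[R]_n) : 'cV[R]_(tn n) :=
  \col_(k < tn n)
    nth 0 [seq X i j | j <- enum 'I_n, i <- filter (fun i : 'I_n => (j <= i)%N) (enum 'I_n)] k.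

Definition elimination_mx {n} (Ee : 'M[R]_(tn n, n * n)) : Prop :=
  forall X : 'M[R]_n, Ee *m vec X = vech X.
Definition duplication_mx {n} (D : 'M[R]_(n * n, tn n)) : Prop :=
  forall Y : 'M[R]_n, Y^T = Y -> D *m vech Y = vec Y.

Definition Cop {n} (Ee : 'M[R]_(tn n, n * n)) (D : 'M[R]_(n * n, tn n))
  (Y : 'M[R]_(n * n)) : 'M[R]_(tn n) := Ee *m Y *m D.

Definition psd {p} (A : 'M[R]_p) : Prop :=
  A^T = A /\ forall x : 'cV[R]_p, 0 <= (x^T *m A *m x) 0 0.
Definition pd {p} (A : 'M[R]_p) : Prop :=
  A^T = A /\ forall x : 'cV[R]_p, x != 0 -> 0 < (x^T *m A *m x) 0 0.

Section Blocks.
Variables n m : nat.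
Variable M : 'M[R]_((n + m) * n).

(* n x n block (i,j), i,j < n+m (0-based) *)
Definition blk (i j : 'I_(n + m)) : 'M[R]_n :=
  \matrix_(a, b) M (mxtens_index (i, a)) (mxtens_index (j, b)).

(* column (0-based) j*n+i of Faa is vec(M_{i,j}) *)
Definition Faa : 'M[R]_(n * n, n * n) :=
  \matrix_(r, c) vec (blk (lshift m (mxtens_unindex c).2)
                          (lshift m (mxtens_unindex c).1)) r 0.
(* column j*m+i' of Fab is vec(M_{n+i',j}) *)
Definition Fab : 'M[R]_(n * n, n * m) :=
  \matrix_(r, c) vec (blk (rshift n (mxtens_unindex c).2)
                          (lshift m (mxtens_unindex c).1)) r 0.
(* column j'*n+i of Fba is vec(M_{i,n+j'}) *)
Definition Fba : 'M[R]_(n * n, m * n) :=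
  \matrix_(r, c) vec (blk (lshift m (mxtens_unindex c).2)
                          (rshift n (mxtens_unindex c).1)) r 0.
(* column j'*m+i' of Fbb is vec(M_{n+i',n+j'}) *)
Definition Fbb : 'M[R]_(n * n, m * m) :=
  \matrix_(r, c) vec (blk (rshift n (mxtens_unindex c).2)
                          (rshift n (mxtens_unindex c).1)) r 0.

Definition FK (K : 'M[R]_(m, n)) : 'M[R]_(n * n) :=
  Faa - Fab *m kron 1%:M K - Fba *m kron K 1%:M + Fbb *m kron K K.

Variables (Ee : 'M[R]_(tn n, n * n)) (D : 'M[R]_(n * n, tn n)).

Definition Fqmi (L : 'M[R]_(m, n)) (H : 'M[R]_n) : 'M[R]_(tn n) :=
  Cop Ee D (Faa *m kron H H - Fab *m kron H L - Fba *m kron L H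
            + Fbb *m kron L L).

Definition Sqmi (Q : 'M[R]_(tn n)) (H : 'M[R]_n) (L : 'M[R]_(m, n)) (beta : R)
  : 'M[R]_(tn n + tn n) :=
  block_mx (beta ^+ 2 *: Q) (Fqmi L H)^T
           (Fqmi L H) (Cop Ee D (kron H H) + (Cop Ee D (kron H H))^T - Q).

Definition S1 (P G : 'M[R]_(tn n)) (K : 'M[R]_(m, n)) (beta : R)
  : 'M[R]_(tn n + tn n) :=
  block_mx (beta ^+ 2 *: P) ((Cop Ee D (FK K))^T *m G)
           (G^T *m Cop Ee D (FK K)) (G^T + G - P).

End Blocks.
End Defs.

From HB Require Import structures.
From mathcomp Require Import all_boot all_order all_algebra.
From mathcomp Require Import zify lra.
Set Implicit Arguments. Unset Strict Implicit. Unset Printing Implicit Defensive.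
Import Order.TTheory GRing.Theory Num.Theory.
Local Open Scope ring_scope.

(* With K = L H^-1, the elimination/duplication pair commutes with H (x) H on
   vectorized symmetric matrices, so F_qmi(L, H) = C(F(K)) C(H (x) H).  Hence,
   with G = C(H (x) H)^-1, the (C1) matrix is the congruence
   diag(G, G)^T S_qmi diag(G, G), and congruence by an invertible matrix
   preserves (semi)definiteness.  Invertibility comes from the lower right
   block of S_qmi: x^T (C + C^T - Q) x >= 0 forces 2 x^T C x >= x^T Q x > 0,
   and if H w = 0 then C(H (x) H) annihilates vech(w w^T), so w = 0. *)

Local Notation quad A x := (((x)^T *m A *m x) 0 0).

Definition vech_pairs n : seq ('I_n * 'I_n) :=
  [seq (i, j) | j : 'I_n <- enum 'I_n,
                i <- filter (fun i : 'I_n => (j <= i)%N) (enum 'I_n)].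

Lemma size_vech_pairs n : size (vech_pairs n) = tn n.
Proof.
have count_geq j : count (leq j) (iota 0 n) = (n - j)%N.
  elim: n => // k IH; rewrite -addn1 iotaD count_cat IH /= add0n addn0.
  by case: leqP; lia.
rewrite size_allpairs_dep -map_comp sumnE big_map.
under eq_bigr => j _ do
  rewrite /= size_filter -(count_map _ (leq j)) val_enum_ord count_geq.
rewrite (reindex_inj rev_ord_inj) /=.
under eq_bigr => j _ do rewrite subKn //.
rewrite -(big_mkord predT (fun j => j.+1)) /tn divn2 mulnC -[n]/(n.+1.-1).
by rewrite -bin2 -bin2_sum big_nat_recl.
Qed.

Lemma uniq_vech_pairs n : uniq (vech_pairs n).
Proof.
apply: allpairs_uniq_dep => [||[j1 i1] [j2 i2] _ _ /= [-> ->]] //.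
- exact: enum_uniq.
- by move=> j _; apply/filter_uniq/enum_uniq.
Qed.

Lemma vech_pairs_lower n (p : 'I_n * 'I_n) : p \in vech_pairs n -> (p.2 <= p.1)%N.
Proof. by move=> /allpairsPdep[j [i [_ + ->]]]; rewrite mem_filter => /andP[]. Qed.

Section Vectorization.
Variable R : realFieldType.

Lemma vechE n (X : 'M[R]_n) (k : 'I_(tn n)) :
  vech X k 0 = nth 0 [seq X p.1 p.2 | p <- vech_pairs n] k.
Proof. by rewrite mxE /vech_pairs map_allpairs. Qed.

Lemma vech_onto_sym n (z : 'cV[R]_(tn n)) : exists2 Y : 'M[R]_n, Y^T = Y & vech Y = z.
Proof.
case: n z => [|n] z; first by exists 0; [rewrite trmx0 | apply/matrixP => -[]].
pose lower (i j : 'I_n.+1) := if (j <= i)%N then (i, j) else (j, i).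
pose zs := [seq z k 0 | k <- enum 'I_(tn n.+1)].
exists (\matrix_(i, j) nth 0 zs (index (lower i j) (vech_pairs n.+1))).
  apply/matrixP => i j; rewrite !mxE /lower.
  by case: ltngtP => // /val_inj ->.
apply/matrixP => k c; rewrite ord1 vechE.
have lt_k : (k < size (vech_pairs n.+1))%N by rewrite size_vech_pairs.
rewrite (nth_map (ord0, ord0)) // mxE /lower.
have /vech_pairs_lower -> := mem_nth (ord0, ord0) lt_k.
rewrite -surjective_pairing index_uniq ?uniq_vech_pairs //.
by rewrite (nth_map k) ?size_enum_ord ?nth_ord_enum // -size_vech_pairs.
Qed.

Lemma vec_inj n : injective (@vec R n).
Proof.
move=> X Y eqXY; apply/matrixP => i j.
have := congr1 (fun v : 'cV[R]_(n * n) => v (mxtens_index (j, i)) 0) eqXY.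
by rewrite !mxE mxtens_indexK.
Qed.

Lemma vec0 n : vec (0 : 'M[R]_n) = 0.
Proof. by apply/matrixP => i j; rewrite !mxE. Qed.

Lemma mul_kron_vec n (A B X : 'M[R]_n) : kron A B *m vec X = vec (B *m X *m A^T).
Proof.
apply/matrixP => k c; rewrite ord1; case: (mxtens_indexP k) => j i.
rewrite /kron !mxE mxtens_indexK /=.
rewrite (reindex (@mxtens_index n n)) /=; last first.
  by exists (@mxtens_unindex n n) => ? _; [apply: mxtens_indexK | apply: mxtens_unindexK].
symmetry; under eq_bigr => b _ do rewrite !mxE big_distrl /=.
rewrite pair_big /=; apply: eq_bigr => [[b a]] _.
by rewrite !mxE !mxtens_indexK /= mulrC mulrA [A _ _ * _]mulrC.
Qed.

End Vectorization.

Section Duplication.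
Variables (R : realFieldType) (n : nat).
Variables (Ee : 'M[R]_(tn n, n * n)) (D : 'M[R]_(n * n, tn n)).
Hypotheses (hE : elimination_mx Ee) (hD : duplication_mx D).

Lemma dup_elim_kron_dup (H : 'M[R]_n) : D *m Ee *m kron H H *m D = kron H H *m D.
Proof.
apply/trmx_inj/mul_rVP => u; rewrite -[u]trmxK -!trmx_mul; congr trmx.
have [Y symY <-] := vech_onto_sym u^T.
rewrite -!mulmxA hD // mul_kron_vec hE hD //.
by rewrite !trmx_mul trmxK symY mulmxA.
Qed.

Lemma Cop_mul_kron (X : 'M[R]_(n * n)) (H : 'M[R]_n) :
  Cop Ee D X *m Cop Ee D (kron H H) = Cop Ee D (X *m kron H H).
Proof. by rewrite /Cop -!mulmxA (mulmxA D) (mulmxA (D *m Ee)) dup_elim_kron_dup. Qed.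

Lemma unitmx_of_Cop_kron (H : 'M[R]_n) : Cop Ee D (kron H H) \in unitmx -> H \in unitmx.
Proof.
move=> unitC; apply: contraT; rewrite unitmxE unitfE negbK -det_tr => /det0P[v nz_v vH0].
set w := v^T; have Hw0 : H *m w = 0 by rewrite -[H]trmxK -trmx_mul vH0 trmx0.
have symY : (w *m w^T)^T = w *m w^T by rewrite trmx_mul trmxK.
have : Cop Ee D (kron H H) *m vech (w *m w^T) = 0.
  by rewrite /Cop -mulmxA hD // -mulmxA mul_kron_vec !mulmxA Hw0 !mul0mx vec0 mulmx0.
rewrite -(mulmx0 _ (Cop Ee D (kron H H))) => /(can_inj (mulKmx unitC)) vechY0.
have /matrixP Y0 : w *m w^T = 0 by apply: vec_inj; rewrite vec0 -hD // vechY0 mulmx0.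
have w0 : w = 0.
  apply/matrixP => i j; rewrite ord1 mxE; apply/eqP.
  by have := Y0 i i; rewrite !mxE big_ord1 !mxE => /eqP; rewrite mulf_eq0 orbb.
by move: nz_v; rewrite -[v]trmxK -/w w0 trmx0 eqxx.
Qed.

End Duplication.

Section QuadraticForms.
Variable R : realFieldType.

Lemma quad_trmx p (A : 'M[R]_p) (x : 'cV[R]_p) : quad A^T x = quad A x.
Proof.
have -> : x^T *m A^T *m x = (x^T *m A *m x)^T by rewrite !trmx_mul trmxK mulmxA.
by rewrite mxE.
Qed.

Lemma quad_congr p (T S : 'M[R]_p) (x : 'cV[R]_p) :
  quad (T^T *m S *m T) x = quad S (T *m x).
Proof. by rewrite trmx_mul !mulmxA. Qed.

Lemma pd_psd p (A : 'M[R]_p) : pd A -> psd A.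
Proof.
move=> [symA posA]; split=> // x.
by have [->|/posA/ltW//] := eqVneq x 0; rewrite mulmx0 mxE.
Qed.

Lemma psd_congr p (T S : 'M[R]_p) : psd S -> psd (T^T *m S *m T).
Proof.
move=> [symS nnegS]; split=> [|x]; last by rewrite quad_congr.
by rewrite !trmx_mul trmxK symS mulmxA.
Qed.

Lemma pd_congr p (T S : 'M[R]_p) : T \in unitmx -> pd S -> pd (T^T *m S *m T).
Proof.
move=> unitT [symS posS]; split=> [|x nz_x]; first by rewrite !trmx_mul trmxK symS mulmxA.
rewrite quad_congr; apply: posS; apply: contra nz_x => /eqP Tx0.
by rewrite -(mulKmx unitT x) Tx0 mulmx0.
Qed.

Lemma unitmx_of_pos_quad p (A : 'M[R]_p) :
  (forall x : 'cV[R]_p, x != 0 -> 0 < quad A x) -> A \in unitmx.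
Proof.
move=> posA; apply: contraT; rewrite unitmxE unitfE negbK => /det0P[v nz_v vA0].
have := posA v^T; rewrite trmxK vA0 mul0mx mxE ltxx; apply.
by apply: contra nz_v => /eqP/(congr1 trmx); rewrite trmxK trmx0 => ->.
Qed.

Lemma quad_block_lower p q (A : 'M[R]_q) B C (Dd : 'M[R]_p) (x : 'cV[R]_p) :
  quad (block_mx A B C Dd) (col_mx 0 x) = quad Dd x.
Proof.
by rewrite tr_col_mx trmx0 mul_row_block !mul0mx !add0r mul_row_col mulmx0 add0r.
Qed.

Lemma pos_quad_of_psd_block p q (A : 'M[R]_q) B C (X Q : 'M[R]_p) :
  pd Q -> (forall y : 'cV[R]_(q + p), 0 <= quad (block_mx A B C (X + X^T - Q)) y) ->
  forall x : 'cV[R]_p, x != 0 -> 0 < quad X x.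
Proof.
move=> [_ posQ] nnegS x nz_x; have := nnegS (col_mx 0 x).
rewrite quad_block_lower !mulmxDr !mulmxDl !mulmxN !mulNmx.
have entryDB (a b c : 'M[R]_1) : (a + b - c) 0 0 = a 0 0 + b 0 0 - c 0 0 by rewrite !mxE.
rewrite entryDB quad_trmx.
have := posQ x nz_x; lra.
Qed.

End QuadraticForms.

Section Congruence.
Variables (R : realFieldType) (n m : nat) (M : 'M[R]_((n + m) * n)).
Variables (Ee : 'M[R]_(tn n, n * n)) (D : 'M[R]_(n * n, tn n)).
Hypotheses (hE : elimination_mx Ee) (hD : duplication_mx D).

Lemma Fqmi_factor (K : 'M[R]_(m, n)) (H : 'M[R]_n) :
  Fqmi M Ee D (K *m H) H = Cop Ee D (FK M K) *m Cop Ee D (kron H H).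
Proof.
rewrite Cop_mul_kron // /Fqmi /FK; congr Cop.
by rewrite !mulmxDl !mulNmx -!mulmxA /kron !tensmx_mul !mul1mx.
Qed.

Lemma S1_congr (Q : 'M[R]_(tn n)) (H : 'M[R]_n) (K : 'M[R]_(m, n)) beta :
  Cop Ee D (kron H H) \in unitmx ->
  let G := invmx (Cop Ee D (kron H H)) in
  S1 M Ee D (G^T *m Q *m G) G K beta =
  (block_mx G 0 0 G)^T *m Sqmi M Ee D Q H (K *m H) beta *m block_mx G 0 0 G.
Proof.
rewrite /S1 /Sqmi Fqmi_factor; move: (Cop Ee D (FK M K)) => F.
move: (Cop Ee D (kron H H)) => C unitC; set G := invmx C.
have CG : C *m G = 1%:M by rewrite mulmxV.
have CGT : G^T *m C^T = 1%:M by rewrite -trmx_mul CG trmx1.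
rewrite tr_block_mx !trmx0 !mulmx_block !mul0mx !mulmx0 !addr0 !add0r.
congr block_mx.
- by rewrite scalemxAl scalemxAr.
- by rewrite trmx_mul mulmxA CGT mul1mx.
- by rewrite -!mulmxA CG mulmx1.
- by rewrite !mulmxDr !mulmxN !mulmxDl !mulNmx -!mulmxA CG mulmx1 !mulmxA CGT mul1mx.
Qed.

Lemma Sqmi_unitmx (Q : 'M[R]_(tn n)) (H : 'M[R]_n) (L : 'M[R]_(m, n)) beta :
  pd Q -> (forall y : 'cV[R]_(tn n + tn n), 0 <= quad (Sqmi M Ee D Q H L beta) y) ->
  Cop Ee D (kron H H) \in unitmx /\ H \in unitmx.
Proof.
move=> pdQ nnegS; have unitC := unitmx_of_pos_quad (pos_quad_of_psd_block pdQ nnegS).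
by split=> //; apply: unitmx_of_Cop_kron unitC.
Qed.

Lemma S1_psd_of_Sqmi (Q : 'M[R]_(tn n)) (H : 'M[R]_n) (L : 'M[R]_(m, n)) beta :
  pd Q -> psd (Sqmi M Ee D Q H L beta) ->
  let G := invmx (Cop Ee D (kron H H)) in
  psd (S1 M Ee D (G^T *m Q *m G) G (L *m invmx H) beta).
Proof.
move=> pdQ psdS G; have [unitC unitH] := Sqmi_unitmx pdQ psdS.2.
by rewrite S1_congr // mulmxKV //; apply: psd_congr.
Qed.

Lemma S1_pd_of_Sqmi (Q : 'M[R]_(tn n)) (H : 'M[R]_n) (L : 'M[R]_(m, n)) beta :
  pd Q -> pd (Sqmi M Ee D Q H L beta) ->
  let G := invmx (Cop Ee D (kron H H)) in
  pd (S1 M Ee D (G^T *m Q *m G) G (L *m invmx H) beta).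
Proof.
move=> pdQ pdS G; have [unitC unitH] := Sqmi_unitmx pdQ (pd_psd pdS).2.
rewrite S1_congr // mulmxKV //; apply: pd_congr pdS.
by rewrite unitmxE det_ublock unitrM -unitmxE unitmx_inv unitC.
Qed.

End Congruence.

Theorem theorem7 (R : realFieldType) (n m N : nat)
  (Ee : 'M[R]_(tn n, n * n)) (D : 'M[R]_(n * n, tn n))
  (M : 'I_N -> 'M[R]_((n + m) * n)) (beta : R) :
  (0 < n)%N -> (0 < m)%N -> (0 < N)%N ->
  elimination_mx Ee -> duplication_mx D ->
  (forall k, (M k)^T = M k) ->
  0 < beta < 1 ->
  (* (C2.1) => (C1.1) with the given choices *)
  (forall (Q : 'I_N -> 'M[R]_(tn n)) (H : 'M[R]_n) (L : 'M[R]_(m, n)),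
     (forall k, pd (Q k)) ->
     (forall k, psd (Sqmi (M k) Ee D (Q k) H L beta)) ->
     let G := invmx (Cop Ee D (kron H H)) in
     let K := L *m invmx H in
     let P := fun k => G^T *m Q k *m G in
     [/\ Cop Ee D (kron H H) \in unitmx, H \in unitmx,
         forall k, pd (P k) &
         forall k, psd (S1 (M k) Ee D (P k) G K beta)]) /\
  (* (C2.2) => (C1.2) with the given choices *)
  (forall (Q : 'I_N -> 'M[R]_(tn n)) (H : 'M[R]_n) (L : 'M[R]_(m, n)),
     (forall k, pd (Q k)) ->
     (forall k, pd (Sqmi (M k) Ee D (Q k) H L 1)) ->
     let G := invmx (Cop Ee D (kron H H)) in
     let K := L *m invmx H in
     let P := fun k => G^T *m Q k *m G in
     [/\ Cop Ee D (kron H H) \in unitmx, H \in unitmx,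
         forall k, pd (P k) &
         forall k, pd (S1 (M k) Ee D (P k) G K 1)]) /\
  (* identical Q^(k) give identical P^(k) *)
  (forall (Q : 'I_N -> 'M[R]_(tn n)) (H : 'M[R]_n),
     (forall k l, Q k = Q l) ->
     let G := invmx (Cop Ee D (kron H H)) in
     let P := fun k => G^T *m Q k *m G in
     forall k l, P k = P l).
Proof.
(* One vertex suffices for invertibility. *)
move=> _ _ N_gt0 hE hD _ _; pose k0 := Ordinal N_gt0.
split; [|split].
- move=> Q H L pdQ psdS G K P.
  have [unitC unitH] := Sqmi_unitmx hD (pdQ k0) (psdS k0).2.
  split=> // k; first by apply: pd_congr; rewrite ?unitmx_inv.
  exact: (S1_psd_of_Sqmi hE hD (pdQ k) (psdS k)).
- move=> Q H L pdQ pdS G K P.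
  have [unitC unitH] := Sqmi_unitmx hD (pdQ k0) (pd_psd (pdS k0)).2.
  split=> // k; first by apply: pd_congr; rewrite ?unitmx_inv.
  exact: (S1_pd_of_Sqmi hE hD (pdQ k) (pdS k)).
- by move=> Q H eqQ G P k l; rewrite /P (eqQ k l).
Qed.
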